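(* Let $n_0\ge1$, $m\ge0$, $\epsilon>0$, and $g\in C^m(B_{n_0}(\epsilon))$. Define $h$ on $B_{n_0}(\epsilon)$, in polar coordinates $u=r\omega$ ($r\ge0$, $\omega\in S^{n_0-1}$), by $$h(r\omega)=\begin{cases}\frac1r\int_0^rg(s\omega)\,ds,& r\ne0,\\ g(0),& r=0.\end{cases}$$ Then $h\in C^m(B_{n_0}(\epsilon))$, and for every multi-index $\alpha$ with $|\alpha|\le m$, $$(\partial_u^\alpha h)(r\omega)=\begin{cases}\frac1{r^{|\alpha|+1}}\int_0^rs^{|\alpha|}(\partial_u^\alpha g)(s\omega)\,ds,& r\ne0,\\ \frac1{|\alpha|+1}(\partial^\alpha_ug)(0),& r=0.\end{cases}$$
   Context: $B_{n_0}(\epsilon)$ denotes the open Euclidean ball of radius $\epsilon$ centered at $0$ in $\mathbb R^{n_0}$. *)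

From HB Require Import structures.
From mathcomp Require Import all_boot all_order all_algebra.
From mathcomp Require Import all_classical all_reals all_analysis.
Unset Printing Implicit Defensive.
Import Order.TTheory GRing.Theory Num.Theory.
Import numFieldNormedType.Exports.
Local Open Scope classical_set_scope.
Local Open Scope ring_scope.

Definition enorm {R : realType} {n : nat} (u : 'rV[R]_n) : R :=
  Num.sqrt (\sum_(i < n) (u ord0 i) ^+ 2).

Definition eball0 {R : realType} (n : nat) (eps : R) : set 'rV[R]_n :=
  [set u | enorm u < eps].

Definition ebasis {R : realType} {n : nat} (i : 'I_n) : 'rV[R]_n :=
  delta_mx ord0 i.

Definition partial {R : realType} {n : nat} (i : 'I_n)
  (f : 'rV[R]_n -> R) : 'rV[R]_n -> R :=
  fun x => 'D_(ebasis i) f x.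

Definition Dseq {R : realType} {n : nat} (s : seq 'I_n)
  (f : 'rV[R]_n -> R) : 'rV[R]_n -> R :=
  foldr (fun i g => partial i g) f s.

Definition mindex (n : nat) := 'I_n -> nat.
Definition mabs {n : nat} (a : mindex n) : nat := (\sum_(i < n) a i)%N.

Definition Dalpha {R : realType} {n : nat} (a : mindex n)
  (f : 'rV[R]_n -> R) : 'rV[R]_n -> R :=
  Dseq (flatten [seq nseq (a i) i | i <- enum 'I_n]) f.

Definition Cm {R : realType} {n : nat} (m : nat) (U : set 'rV[R]_n)
  (f : 'rV[R]_n -> R) : Prop :=
  forall s : seq 'I_n, (size s <= m)%N ->
    (forall x, U x -> {for x, continuous (Dseq s f)}) /\
    ((size s < m)%N -> forall (i : 'I_n) x, U x ->
        derivable (Dseq s f) x (ebasis i)).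

Definition int0 {R : realType} (r : R) (f : R -> R) : R :=
  Rintegral (@lebesgue_measure R) `[0, r] f.

Definition radial_avg {R : realType} {n : nat} (g : 'rV[R]_n -> R)
  (u : 'rV[R]_n) : R :=
  let r := enorm u in
  if r != 0 then r^-1 * int0 r (fun s => g (s *: (r^-1 *: u)))
  else g 0.

From HB Require Import structures.
From mathcomp Require Import all_boot all_order all_algebra.
From mathcomp Require Import all_classical all_reals all_analysis.
Import Order.TTheory GRing.Theory Num.Theory.
Import numFieldNormedType.Exports.
Local Open Scope classical_set_scope.
Local Open Scope ring_scope.

(* The substitution s = r t writes the average as h = A_0 g, where
   A_k G (y) := \int_0^1 t^k G(t y) dt  ([radial_mean k G y]).  A_k G is
   continuous by dominated convergence, and differentiating under the integral
   sign, the chain rule produces one more factor t: d_i (A_k G) = A_(k+1) (d_i G).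
   Hence d^alpha h = A_|alpha| (d^alpha g), and undoing the substitution gives
   the formula for r <> 0, while A_k G (0) = G(0) / (k+1). *)

Section enorm.
Context {R : realType} {n : nat}.
Implicit Types (u y : 'rV[R]_n).

Lemma enorm_ge0 u : 0 <= enorm u.
Proof. exact: sqrtr_ge0. Qed.

Lemma enormZ (t : R) u : enorm (t *: u) = `|t| * enorm u.
Proof.
rewrite /enorm.
under eq_bigr do rewrite mxE exprMn.
by rewrite -mulr_sumr sqrtrM ?sqrtr_sqr // sqr_ge0.
Qed.

Lemma enormZ_le (t : R) u : 0 <= t <= 1 -> enorm (t *: u) <= enorm u.
Proof.
by move=> /andP[t0 t1]; rewrite enormZ ger0_norm // ler_piMl // enorm_ge0.
Qed.

Lemma coord_le_enorm u i : `|u ord0 i| <= enorm u.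
Proof.
rewrite /enorm -sqrtr_sqr ler_sqrt; last by apply: sumr_ge0 => j _; exact: sqr_ge0.
by rewrite (bigD1 i) //= lerDl; apply: sumr_ge0 => j _; exact: sqr_ge0.
Qed.

Lemma enorm_eq0 u : enorm u = 0 -> u = 0.
Proof.
move=> u0; apply/matrixP => a i; rewrite (ord1 a) mxE.
by apply/eqP; rewrite -normr_le0 -u0 coord_le_enorm.
Qed.

Lemma mxnorm_le_enorm u : `|u| <= enorm u.
Proof.
rewrite [leLHS]/Num.Def.normr /= mx_normrE; apply/bigmax_leP.
split=> [|[a i] _ /=]; first exact: enorm_ge0.
by rewrite (ord1 a); exact: coord_le_enorm.
Qed.

Lemma continuous_enorm : continuous (@enorm R n).
Proof.
move=> x.
have -> : @enorm R n = Num.sqrt \o (fun y : 'rV[R]_n => \sum_(i < n) (y ord0 i) ^+ 2).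
  by [].
apply: continuous_comp; last exact: sqrt_continuous.
apply: continuous_big => [|i _]; first exact: add_continuous.
move=> y; apply: (@continuous_comp _ _ _ (fun y : 'rV[R]_n => y ord0 i)
  (fun r : R => r ^+ 2)); first exact: coord_continuous.
exact: exprn_continuous.
Qed.

Lemma near_eball0 (e : R) y :
  eball0 n e y -> \forall z \near y, eball0 n e z.
Proof. exact: (cvgr_lt (enorm y) (continuous_enorm y)). Qed.

Lemma near0_line_in_eball0 (rho : R) (v u : 'rV[R]_n) : eball0 n rho u ->
  exists2 del : R, 0 < del & forall x, `|x| < del -> eball0 n rho (x *: v + u).
Proof.
move=> hu.
have line_cvg : (x *: v + u) @[x --> (0 : R)] --> u.
  rewrite -[X in _ --> X]add0r -(scale0r v).
  by apply: cvgD; [apply: cvgZ; [exact: cvg_id | exact: cvg_cst] | exact: cvg_cst].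
have [del del0 hdel] : nbhs_ball (0 : R) [set x | enorm (x *: v + u) < rho].
  apply/nbhs_ballP.
  exact: cvgr_lt (enorm u) (cvg_comp _ _ line_cvg (continuous_enorm u)) rho hu.
exists del => // x hx; apply: hdel.
by rewrite -ball_normE /= sub0r normrN.
Qed.

Definition cball (rho : R) : set 'rV[R]_n := [set y | enorm y <= rho].

Lemma compact_cball rho : compact (cball rho).
Proof.
apply: bounded_closed_compact.
  exists rho; split; first exact: num_real.
  move=> M hM y /= hy; apply: le_trans (mxnorm_le_enorm y) _.
  exact: le_trans hy (ltW hM).
apply: (@preimage_closed _ _ (@enorm R n) [set x | x <= rho]); last first.
  exact: closed_le.
by move=> y _; exact: continuous_enorm.
Qed.

Lemma continuous_bounded_cball {G : 'rV[R]_n -> R} {eps : R} {u} :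
  (forall x, eball0 n eps x -> {for x, continuous G}) -> eball0 n eps u ->
  exists rho M, [/\ enorm u < rho, rho < eps, 0 <= M &
                    forall y, cball rho y -> `|G y| <= M].
Proof.
move=> cG hu; pose rho := (enorm u + eps) / 2.
have hur : enorm u < rho by rewrite /rho midf_lt.
have hre : rho < eps by rewrite /rho midf_lt.
have cK : {within cball rho, continuous G}.
  apply: continuous_in_subspaceT => x; rewrite inE => hx.
  by apply/cG/(le_lt_trans hx).
have /compact_bounded [M [_ hM]] := continuous_compact cK (compact_cball rho).
have bound y : cball rho y -> `|G y| <= M + 1.
  by move=> hy; apply: (hM (M + 1)); [rewrite ltrDl | exists y].
exists rho, (M + 1); split => //.
exact: le_trans (normr_ge0 _) (bound u (ltW hur)).
Qed.

End enorm.

Lemma cvg_nbhs_seq {R : realType} {V : normedModType R} (f : V -> R) (p : V) (l : R) :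
  (forall w : nat -> V, w k @[k --> \oo] --> p -> f (w k) @[k --> \oo] --> l) ->
  f y @[y --> p] --> l.
Proof.
move=> H; apply: contrapT => nc.
have [e e0 he] : exists2 e : R, 0 < e & forall d, 0 < d ->
    exists y, `|p - y| < d /\ ~ (`|l - f y| < e).
  apply: contrapT => nex; apply: nc; apply/cvgrPdist_lt => e e0.
  apply: contrapT => nnear; apply: nex; exists e => // d d0.
  apply: contrapT => nall; apply: nnear; apply/nbhs_ballP; exists d => //= y.
  rewrite -ball_normE /= => pyd; apply: contrapT => nly; apply: nall.
  by exists y.
have /choice[w hw] : forall k : nat,
    exists y, `|p - y| < k.+1%:R^-1 /\ ~ (`|l - f y| < e).
  by move=> k; apply: he.
have : f (w k) @[k --> \oo] --> l.
  apply: H; apply/cvgrPdist_lt => r r0.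
  near=> k; apply: lt_trans (hw k).1 _.
  by near: k; exact: (near_infty_natSinv_lt (PosNum r0)).
move=> /cvgrPdist_lt /(_ e e0) [N _ hN].
by apply: (hw N).2; apply: hN => /=.
Unshelve. all: by end_near. Qed.

Lemma near_eq_continuous {T U : topologicalType} (f g : T -> U) (x : T) :
  {near x, g =1 f} -> {for x, continuous g} -> {for x, continuous f}.
Proof.
move=> gf cg; have gfx : g x = f x := nbhs_singleton gf.
by apply: cvg_trans (near_eq_cvg gf) _; rewrite -gfx.
Qed.

Section integral01.
Context {R : realType}.
Local Notation mu := (@lebesgue_measure R).

Lemma continuous_integrable01 (f : R -> R) : {within `[0, 1], continuous f} ->
  mu.-integrable `[0, 1] (EFin \o f).
Proof.
by move=> cf; apply: continuous_compact_integrable => //; exact: segment_compact.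
Qed.

Lemma ler_norm_expr01M {t a M : R} {k} : 0 <= t <= 1 -> `|a| <= M -> `|t ^+ k * a| <= M.
Proof.
move=> /andP[t0 t1] aM; rewrite normrM normrX ger0_norm // -[M]mul1r.
by apply: ler_pM; rewrite ?exprn_ge0 ?exprn_ile1.
Qed.

Lemma int01_dominated_cvg (f_ : nat -> R -> R) (f : R -> R) (M : R) :
  (forall k, {within `[0, 1], continuous f_ k}) -> {within `[0, 1], continuous f} ->
  (forall t, 0 <= t <= 1 -> f_ ^~ t @ \oo --> f t) ->
  (forall k t, 0 <= t <= 1 -> `|f_ k t| <= M) ->
  int0 1 (f_ k) @[k --> \oo] --> int0 1 f.
Proof.
move=> cf_ cf ff bM; apply: fine_cvg.
rewrite fineK; last exact/integrable_fin_num/continuous_integrable01.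
apply: (@dominated_cvg _ _ _ mu _ (measurable_itv _) (fun k x => (f_ k x)%:E)
  _ (EFin \o cst M)).
- by move=> k; have /integrableP[] := continuous_integrable01 _ (cf_ k).
- move=> x /= /[1!in_itv] /= hx; apply: cvg_EFin; first exact: nearW.
  exact: ff.
- by [].
- by apply: continuous_integrable01; exact: cst_continuous.
- by move=> k x /=; rewrite in_itv lee_fin => /bM.
Qed.

Lemma int0_pow (k : nat) : int0 1 (fun t : R => t ^+ k) = (k.+1%:R)^-1.
Proof.
pose F t : R := (k.+1%:R)^-1 * t ^+ k.+1.
have dF (x : R) : is_derive x 1 F (x ^+ k).
  have -> : F = k.+1%:R^-1 \*: (@id R ^+ k.+1) by apply/funext => t; rewrite /F !fctE.
  apply: trigger_derive; change (k.+1%:R^-1 * (k.+1%:R * x ^+ k * 1) = x ^+ k).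
  by rewrite mulr1 mulrA mulVf ?mul1r // pnatr_eq0.
have cF : continuous F.
  by move=> x; apply: cvgM; [exact: cvg_cst | exact: exprn_continuous].
rewrite /int0 /Rintegral (@continuous_FTC2 R (fun t => t ^+ k) F 0 1 ltr01).
- by rewrite /F /= expr1n mulr1 expr0n /= mulr0 subr0.
- by apply: continuous_in_subspaceT => x _; exact: exprn_continuous.
- split.
  + by move=> x _; case: (dF x).
  + exact: cvg_at_right_filter (cF 0).
  + exact: cvg_at_left_filter (cF 1).
- by move=> x _; rewrite derive1E; case: (dF x).
Qed.

Lemma int0_rescale (r : R) (f : R -> R) : 0 < r ->
  (forall s, 0 <= s <= r -> {for s, continuous f}) ->
  int0 r f = r * int0 1 (fun t => f (r * t)).
Proof.
move=> r0 cf.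
pose F x : R := r * x.
have dF (x : R) : is_derive x 1 F r.
  by rewrite /F; apply: trigger_derive; rewrite [_%:A]mulr1.
have F' : derive1 F = cst r.
  by apply/funext => x; rewrite derive1E; exact: derive_val.
have cF : continuous F by move=> x; apply: cvgM; [exact: cvg_cst | exact: cvg_id].
have cfF : {within `[0, 1], continuous (f \o F)}.
  apply: continuous_in_subspaceT => x; rewrite inE /= in_itv /= => /andP[x0 x1].
  apply: continuous_comp; first exact: cF.
  apply: cf; rewrite /F; apply/andP; split.
    exact: mulr_ge0 (ltW r0) x0.
  exact: ler_piMr (ltW r0) x1.
have subst : (\int[mu]_(x in `[0%R, r]) (f x)%:E =
             \int[mu]_(x in `[0%R, 1%R]) (((f \o F) * derive1 F) x)%:E)%E.
  have := @integration_by_substitution_increasing R F f 0 1 ler01.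
  rewrite /F mulr0 mulr1; apply; rewrite ?F'.
  - by move=> x y _ _ xy; rewrite ltr_pM2l.
  - by move=> x _; exact: cst_continuous.
  - exact: is_cvg_cst.
  - exact: is_cvg_cst.
  - split; first by move=> x _; case: (dF x).
      exact: cvg_at_right_filter (cF 0).
    exact: cvg_at_left_filter (cF 1).
  - by apply: continuous_in_subspaceT => x; rewrite inE /= in_itv /=; exact: cf.
rewrite /int0 {1}/Rintegral subst F' -/(Rintegral mu `[0, 1] (fun x => f (r * x) * r)).
rewrite RintegralZr //; first by rewrite mulrC.
exact: continuous_integrable01 _ cfF.
Qed.

Lemma is_derive_int01 (f df : R -> R -> R) (del M : R) : 0 < del ->
  (forall x : R, `|x| < del -> {within `[0, 1], continuous f x}) ->
  (forall x t : R, `|x| < del -> 0 <= t <= 1 -> is_derive x 1 (f ^~ t) (df x t)) ->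
  (forall x t : R, `|x| < del -> 0 <= t <= 1 -> `|df x t| <= M) ->
  is_derive (0 : R) 1 (fun x => int0 1 (f x)) (int0 1 (df 0)).
Proof.
move=> del0 cf df_ dfM.
pose I := `](- del), del[%classic.
have II x : I x -> `|x| < del by rewrite /I /= in_itv /= ltr_norml.
have I0 : I 0 by rewrite /I /= in_itv /= oppr_lt0 del0.
have in01 t : `[0, 1]%classic t -> 0 <= t <= 1 by rewrite /= in_itv.
have M0 : 0 <= M.
  by apply: le_trans (normr_ge0 _) (dfM 0 0 _ _); rewrite ?normr0 ?lexx ?ler01.
have f_int x : I x -> mu.-integrable `[0, 1] (EFin \o f x).
  by move=> /II /cf; exact: continuous_integrable01.
have f_der x t : I x -> `[0, 1]%classic t -> derivable (f ^~ t) x 1.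
  by move=> /II hx /in01 ht; case: (df_ x t hx ht).
have d1f x t : I x -> `[0, 1]%classic t -> partial1of2 f x t = df x t.
  by move=> /II hx /in01 ht; rewrite partial1of2E; case: (df_ x t hx ht).
have f_ub x t : I x -> `[0, 1]%classic t -> `|partial1of2 f x t| <= cst M t.
  by move=> hx ht; rewrite d1f //; apply: dfM; [exact: II | exact: in01].
have M_int : mu.-integrable `[0, 1] (EFin \o cst M).
  by apply: continuous_integrable01; exact: cst_continuous.
have := @differentiation_under_integral R _ _ mu f _ (measurable_itv `[0, 1])
  0 _ _ I0 f_int f_der _ (fun _ => M0) M_int f_ub.
have := @derivable_under_integral R _ _ mu f _ (measurable_itv `[0, 1])
  0 _ _ I0 f_int f_der _ (fun _ => M0) M_int f_ub.
move=> f_derivable f_derive; apply: DeriveDef => //.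
rewrite -derive1E f_derive; apply: eq_Rintegral => t; rewrite inE => ht.
exact: d1f.
Qed.

End integral01.

Section radial_mean.
Context {R : realType} {n : nat}.

Definition radial_mean (k : nat) (G : 'rV[R]_n -> R) (y : 'rV[R]_n) : R :=
  int0 1 (fun t => t ^+ k * G (t *: y)).

Lemma radial_mean0 (G : 'rV[R]_n -> R) k : radial_mean k G 0 = (k.+1%:R)^-1 * G 0.
Proof.
rewrite /radial_mean; under eq_fun do rewrite scaler0.
rewrite /int0 RintegralZr; first by rewrite -/(int0 1 _) int0_pow.
  exact: measurable_itv.
apply: continuous_integrable01.
by apply: continuous_in_subspaceT => x _; exact: exprn_continuous.
Qed.

Context {G : 'rV[R]_n -> R} {eps : R}.
Hypothesis cG : forall x, eball0 n eps x -> {for x, continuous G}.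

Lemma continuous_radial_integrand k y t : eball0 n eps (t *: y) ->
  {for t, continuous (fun t : R => t ^+ k * G (t *: y))}.
Proof.
move=> ty; apply: cvgM; first exact: exprn_continuous.
apply: (continuous_comp (f := fun t : R => t *: y) (g := G)); last exact: cG.
by apply: cvgZ; [exact: cvg_id | exact: cvg_cst].
Qed.

Lemma continuous01_radial_integrand k y : eball0 n eps y ->
  {within `[0, 1], continuous (fun t : R => t ^+ k * G (t *: y))}.
Proof.
move=> hy; apply: continuous_in_subspaceT => t; rewrite inE /= in_itv /= => ht.
apply: continuous_radial_integrand; exact: le_lt_trans (enormZ_le _ y ht) hy.
Qed.

Lemma int0_radial_mean k y : eball0 n eps y -> enorm y != 0 ->
  int0 (enorm y) (fun s => s ^+ k * G (s *: ((enorm y)^-1 *: y))) =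
  enorm y ^+ k.+1 * radial_mean k G y.
Proof.
move=> hy y0; set r := enorm y.
have r0 : 0 < r by rewrite lt0r y0 enorm_ge0.
rewrite int0_rescale //; last first.
  move=> s /andP[s0 sr]; apply: continuous_radial_integrand.
  rewrite /eball0 /= !enormZ ger0_norm // ger0_norm ?invr_ge0 ?enorm_ge0 //.
  by rewrite mulrA -/r mulfVK ?gt_eqF // (le_lt_trans sr).
rewrite /radial_mean /int0.
under eq_Rintegral do rewrite scalerA mulrAC mulfV ?gt_eqF // mul1r exprMn -mulrA.
rewrite RintegralZl //; last exact/continuous_integrable01/continuous01_radial_integrand.
by rewrite exprS mulrA.
Qed.

Lemma continuous_radial_mean k u : eball0 n eps u -> {for u, continuous (radial_mean k G)}.
Proof.
move=> hu; have [rho [M [hur hre _ hM]]] := continuous_bounded_cball cG hu.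
apply: cvg_nbhs_seq => w wu.
have [N _ hN] := cvgr_lt (enorm u) (cvg_comp _ _ wu (continuous_enorm u)) rho hur.
have hwN j : enorm (w (j + N)%N) < rho by apply: hN; rewrite /= leq_addl.
rewrite -(cvg_shiftn N).
apply: (@int01_dominated_cvg R (fun j t => t ^+ k * G (t *: w (j + N)%N)) _ M).
- by move=> j; apply: continuous01_radial_integrand; exact: lt_trans (hwN j) hre.
- exact: continuous01_radial_integrand.
- move=> t ht; apply: cvgM; first exact: cvg_cst.
  apply: cvg_comp; last by apply: cG; exact: le_lt_trans (enormZ_le _ u ht) hu.
  by apply: cvgZ; [exact: cvg_cst | rewrite (cvg_shiftn N w)].
- move=> j t ht; apply: (ler_norm_expr01M ht); apply: hM.
  exact: le_trans (enormZ_le _ _ ht) (ltW (hwN j)).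
Qed.

End radial_mean.

Section radial_mean_derive.
Context {R : realType} {n : nat}.

Lemma derive_along_line (G : 'rV[R]_n -> R) (w P : 'rV[R]_n) :
  'D_w G P = 'D_1 (fun s : R => G (s *: w + P)) 0.
Proof.
rewrite /derive; set g1 := fun h => h^-1 *: _; set g2 := fun h => h^-1 *: _.
suff -> : g1 = g2 by [].
by apply/funext => h; rewrite /g1 /g2 /= addr0 scale0r add0r [_%:A]mulr1.
Qed.

Lemma is_derive_along_line (G : 'rV[R]_n -> R) (w P : 'rV[R]_n) (l : R) :
  is_derive (0 : R) 1 (fun s : R => G (s *: w + P)) l -> is_derive P w G l.
Proof.
move=> [dG <-]; apply: DeriveDef; first exact/derivable1P.
by rewrite derive_along_line.
Qed.

Lemma is_derive_line (G : 'rV[R]_n -> R) (w P : 'rV[R]_n) (x t : R) :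
  derivable G P w ->
  is_derive x 1 (fun x' : R => G (((x' - x) * t) *: w + P)) (t * 'D_w G P).
Proof.
move=> dG.
have lin : is_derive x 1 (fun x' : R => (x' - x) * t) t.
  by apply: trigger_derive; rewrite subrr scaler0 add0r subr0; exact: mulr1.
have dline : is_derive ((x - x) * t) 1 (fun s : R => G (s *: w + P)) ('D_w G P).
  rewrite subrr mul0r; apply: DeriveDef; first exact: (proj1 (derivable1P G P w) dG).
  by rewrite derive_along_line.
have := @is_derive1_comp R (fun s : R => G (s *: w + P))
  (fun x' : R => (x' - x) * t) x _ _ dline lin.
by rewrite mulrC.
Qed.

Lemma is_derive_radial_integrand (G : 'rV[R]_n -> R) (e u : 'rV[R]_n) k (x t : R) :
  derivable G (t *: (x *: e + u)) e ->
  is_derive x 1 (fun x' : R => t ^+ k * G (t *: (x' *: e + u)))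
    (t ^+ k.+1 * 'D_e G (t *: (x *: e + u))).
Proof.
move=> dG; rewrite exprSr -mulrA.
have -> : (fun x' : R => t ^+ k * G (t *: (x' *: e + u))) =
    t ^+ k \*: (fun x' => G (((x' - x) * t) *: e + t *: (x *: e + u))).
  apply/funext => x' /=; congr (_ * G _).
  rewrite !scalerDr !scalerA addrA -scalerDl mulrBl (mulrC x' t) (mulrC x t).
  by rewrite subrK.
exact/is_deriveZ/is_derive_line.
Qed.

Lemma is_derive_radial_mean (G : 'rV[R]_n -> R) eps k u (i : 'I_n) :
  (forall x, eball0 n eps x -> {for x, continuous G}) ->
  (forall x, eball0 n eps x -> derivable G x (ebasis i)) ->
  (forall x, eball0 n eps x -> {for x, continuous (partial i G)}) ->
  eball0 n eps u ->
  is_derive u (ebasis i) (radial_mean k G) (radial_mean k.+1 (partial i G) u).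
Proof.
move=> cG dG cP hu; set e : 'rV[R]_n := ebasis i.
have [rho [M [hur hre _ hM]]] := continuous_bounded_cball cP hu.
have [del del0 hdel] := near0_line_in_eball0 _ e _ hur.
have in_cball x t : `|x| < del -> 0 <= t <= 1 -> cball rho (t *: (x *: e + u)).
  by move=> hx ht; exact: le_trans (enormZ_le _ _ ht) (ltW (hdel x hx)).
pose f x t : R := t ^+ k * G (t *: (x *: e + u)).
pose df x t : R := t ^+ k.+1 * partial i G (t *: (x *: e + u)).
have -> : radial_mean k.+1 (partial i G) u = int0 1 (df 0).
  by rewrite /df scale0r add0r.
apply/is_derive_along_line/(@is_derive_int01 _ f df del M del0).
- move=> x hx; apply: (continuous01_radial_integrand cG).
  exact: lt_trans (hdel x hx) hre.
- move=> x t hx ht; apply/is_derive_radial_integrand/dG.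
  exact: le_lt_trans (in_cball x t hx ht) hre.
- by move=> x t hx ht; apply: (ler_norm_expr01M ht); exact/hM/in_cball.
Qed.

End radial_mean_derive.

Section derivatives_of_radial_avg.
Context {R : realType} {n : nat}.

Definition mindex_seq (a : mindex n) : seq 'I_n :=
  flatten [seq nseq (a i) i | i <- enum 'I_n].

Lemma DalphaE (a : mindex n) (f : 'rV[R]_n -> R) : Dalpha a f = Dseq (mindex_seq a) f.
Proof. by []. Qed.

Lemma size_mindex_seq (a : mindex n) : size (mindex_seq a) = mabs a.
Proof.
rewrite size_flatten /shape -map_comp sumnE big_map /mabs -[RHS]big_enum /=.
by apply: eq_bigr => i _; rewrite /= size_nseq.
Qed.

Lemma radial_avg_eq (g : 'rV[R]_n -> R) eps y :
  (forall x, eball0 n eps x -> {for x, continuous g}) -> eball0 n eps y ->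
  radial_avg g y = radial_mean 0 g y.
Proof.
move=> cg hy; rewrite /radial_avg.
case: ifPn => [y0 | /negPn/eqP/enorm_eq0 ->]; last by rewrite radial_mean0 invr1 mul1r.
have := int0_radial_mean cg 0 _ hy y0.
under eq_fun do rewrite expr0 mul1r.
by move=> ->; rewrite expr1 mulKf.
Qed.

Context {g : 'rV[R]_n -> R} {m : nat} {eps : R}.
Hypothesis Cg : Cm m (eball0 n eps) g.

Lemma Dseq_radial_avg (s : seq 'I_n) : (size s <= m)%N ->
  forall y, eball0 n eps y ->
  Dseq s (radial_avg g) y = radial_mean (size s) (Dseq s g) y.
Proof.
elim: s => [|i s IH] hs y hy.
  by have [cg _] := Cg [::] isT; exact: radial_avg_eq _ _ _ cg hy.
have hs' : (size s < m)%N by [].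
have near_eq : \forall z \near y,
    Dseq s (radial_avg g) z = radial_mean (size s) (Dseq s g) z.
  by near do apply: IH (ltnW hs) _ _; exact: near_eball0.
rewrite /= /partial (near_eq_derive _ near_eq).
have [cS dS] := Cg s (ltnW hs'); have [cP _] := Cg (i :: s) hs.
have D := is_derive_radial_mean _ _ (size s) _ _ cS (dS hs' i) cP hy.
by rewrite derive_val.
Unshelve. all: by end_near. Qed.

Lemma near_Dseq_radial_avg (s : seq 'I_n) : (size s <= m)%N ->
  forall x, eball0 n eps x ->
  \forall z \near x, radial_mean (size s) (Dseq s g) z = Dseq s (radial_avg g) z.
Proof.
by move=> hs x hx; near do rewrite Dseq_radial_avg //; exact: near_eball0.
Unshelve. all: by end_near. Qed.

End derivatives_of_radial_avg.

Theorem lemma3p11 (R : realType) (n0 m : nat) (eps : R)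
  (g : 'rV[R]_n0 -> R) :
  (1 <= n0)%N -> 0 < eps -> Cm m (eball0 n0 eps) g ->
  Cm m (eball0 n0 eps) (radial_avg g) /\
  forall a : mindex n0, (mabs a <= m)%N ->
    forall u : 'rV[R]_n0, eball0 n0 eps u ->
      Dalpha a (radial_avg g) u =
        (let r := enorm u in
         if r != 0 then
           (r ^+ (mabs a).+1)^-1 *
             int0 r (fun s => s ^+ mabs a * Dalpha a g (s *: (r^-1 *: u)))
         else ((mabs a).+1%:R)^-1 * Dalpha a g 0).
Proof.
move=> _ _ Cg; split=> [s hs | a ha u hu].
  have [cS dS] := Cg s hs; split=> [x hx | hs' i x hx].
    exact: near_eq_continuous (near_Dseq_radial_avg Cg s hs x hx)
                              (continuous_radial_mean cS _ _ hx).
  have [cP _] := Cg (i :: s) hs'.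
  apply: near_eq_derivable (near_Dseq_radial_avg Cg s hs x hx) _.
  by case: (is_derive_radial_mean _ _ (size s) _ _ cS (dS hs' i) cP hx).
have hs : (size (mindex_seq a) <= m)%N by rewrite size_mindex_seq.
have [cS _] := Cg _ hs.
rewrite DalphaE (Dseq_radial_avg Cg) // size_mindex_seq /=.
case: ifPn => [u0 | /negPn/eqP/enorm_eq0 ->]; last by rewrite radial_mean0.
by rewrite (int0_radial_mean cS) // mulKf // expf_neq0.
Qed.
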